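(* Let $N(T)$ be a $C^0$ net on a grid $T$ with lines $s_i$, $t_j$, having the BMSDD property with constant $L$, and let $(\boldsymbol{\alpha}^{[s]},\boldsymbol{\beta}^{[s]}),(\boldsymbol{\alpha}^{[t]},\boldsymbol{\beta}^{[t]})\in\mathscr{W}$. Let $\tilde T$ be the grid with lines $\tilde s_{2i}=(1-\alpha^{[s]}_i)s_i+\alpha^{[s]}_is_{i+1}$, $\tilde s_{2i+1}=(1-\beta^{[s]}_i)s_i+\beta^{[s]}_is_{i+1}$, $\tilde t_{2j}=(1-\alpha^{[t]}_j)t_j+\alpha^{[t]}_jt_{j+1}$, $\tilde t_{2j+1}=(1-\beta^{[t]}_j)t_j+\beta^{[t]}_jt_{j+1}$ ($i,j\in\mathbb{Z}$). Then the net $\mathcal{C}(N)|_{\tilde T}$ has the BMSDD property with constant $3L$.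
   Context: $\mathscr{W}$ is the set of pairs $(\boldsymbol{\alpha},\boldsymbol{\beta})$ of real bi-infinite sequences with $\inf_i\min\{\alpha_i,1-\beta_i,\beta_i-\alpha_i\}>0$. For strictly increasing bi-infinite real sequences $(s_i)$, $(t_j)$, unbounded above and below, the grid is $T=\bigcup_i\{s_i\}\times\mathbb{R}\cup\bigcup_j\mathbb{R}\times\{t_j\}$. A net $N(T)$ is a function on $T$ with values in $\mathbb{R}^m$; it is $C^0$ if all u-functions $s\mapsto N(s,t_j)$, $t\mapsto N(s_i,t)$ are continuous. The piecewise Coons patch is defined on each rectangle $[s_i,s_{i+1}]\times[t_j,t_{j+1}]$, with $h_1=s_{i+1}-s_i$, $h_2=t_{j+1}-t_j$, by $\mathcal{C}(N)(s,t)=\frac{s_{i+1}-s}{h_1}N(s_i,t)+\frac{s-s_i}{h_1}N(s_{i+1},t)+\frac{t_{j+1}-t}{h_2}N(s,t_j)+\frac{t-t_j}{h_2}N(s,t_{j+1})-B(s,t)$, with $B(s,t)=\frac{s_{i+1}-s}{h_1}\big(\frac{t_{j+1}-t}{h_2}N(s_i,t_j)+\frac{t-t_j}{h_2}N(s_i,t_{j+1})\big)+\frac{s-s_i}{h_1}\big(\frac{t_{j+1}-t}{h_2}N(s_{i+1},t_j)+\frac{t-t_j}{h_2}N(s_{i+1},t_{j+1})\big)$. For $\sigma_1\ne\sigma_2$, $\tau_1\ne\tau_2$, $[\sigma_1,\sigma_2;\tau_1,\tau_2]N=\frac{N(\sigma_1,\tau_1)+N(\sigma_2,\tau_2)-N(\sigma_2,\tau_1)-N(\sigma_1,\tau_2)}{(\sigma_1-\sigma_2)(\tau_1-\tau_2)}$;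 a net on a grid has the BMSDD property with constant $L$ if $\|[\sigma_1,\sigma_2;\tau_1,\tau_2]N\|_\infty\le L$ whenever $\sigma_1\ne\sigma_2$, $\tau_1\ne\tau_2$ and all four points $(\sigma_i,\tau_j)$ lie on the grid. *)

From Stdlib Require Import Reals ZArith ClassicalEpsilon.
Open Scope R_scope.

Definition grid_seq (s : Z -> R) : Prop :=
  (forall i, s i < s (i + 1)%Z) /\
  (forall M, exists i, M < s i) /\ (forall M, exists i, s i < M).

Definition on_grid (s t : Z -> R) (x y : R) : Prop :=
  (exists i, x = s i) \/ (exists j, y = t j).

(* Nets with values in R^m are modelled as N : R -> R -> nat -> R, coordinate k
   meaningful for k < m; only values on the grid are ever used. *)

Definition C0_net (m : nat) (s t : Z -> R) (N : R -> R -> nat -> R) : Prop :=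
  forall k, (k < m)%nat ->
    (forall j, continuity (fun x => N x (t j) k)) /\
    (forall i, continuity (fun y => N (s i) y k)).

Definition ddiff (N : R -> R -> nat -> R) (s1 s2 t1 t2 : R) (k : nat) : R :=
  (N s1 t1 k + N s2 t2 k - N s2 t1 k - N s1 t2 k) / ((s1 - s2) * (t1 - t2)).

(* BMSDD property with constant L on the grid (s,t); the sup-norm bound is
   written coordinatewise. *)
Definition BMSDD (m : nat) (s t : Z -> R) (N : R -> R -> nat -> R) (L : R) : Prop :=
  forall s1 s2 t1 t2, s1 <> s2 -> t1 <> t2 ->
    on_grid s t s1 t1 -> on_grid s t s1 t2 ->
    on_grid s t s2 t1 -> on_grid s t s2 t2 ->
    forall k, (k < m)%nat -> Rabs (ddiff N s1 s2 t1 t2 k) <= L.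

Definition in_W (alpha beta : Z -> R) : Prop :=
  exists d, 0 < d /\
    forall i, d <= alpha i /\ d <= 1 - beta i /\ d <= beta i - alpha i.

Definition refine (s alpha beta : Z -> R) (n : Z) : R :=
  let i := (n / 2)%Z in
  if Z.even n then (1 - alpha i) * s i + alpha i * s (i + 1)%Z
  else (1 - beta i) * s i + beta i * s (i + 1)%Z.

(* An index i with s_i <= x <= s_{i+1} (chosen by epsilon; exists for grid seqs;
   on common edges the Coons formula from both cells agrees). *)
Definition cell (s : Z -> R) (x : R) : Z :=
  epsilon (inhabits 0%Z) (fun i => s i <= x <= s (i + 1)%Z).

Definition coons (s t : Z -> R) (N : R -> R -> nat -> R) : R -> R -> nat -> R :=
  fun x y k =>
    let i := cell s x in let j := cell t y in
    let s0 := s i in let s1 := s (i + 1)%Z in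
    let t0 := t j in let t1 := t (j + 1)%Z in
    let h1 := s1 - s0 in let h2 := t1 - t0 in
    let B := (s1 - x) / h1 * ((t1 - y) / h2 * N s0 t0 k + (y - t0) / h2 * N s0 t1 k)
           + (x - s0) / h1 * ((t1 - y) / h2 * N s1 t0 k + (y - t0) / h2 * N s1 t1 k) in
    (s1 - x) / h1 * N s0 y k + (x - s0) / h1 * N s1 y k
    + (t1 - y) / h2 * N x t0 k + (y - t0) / h2 * N x t1 k - B.

(** On a single cell the mixed difference of the Coons patch is a combination of
    three mixed differences of [N] over rectangles with two sides on grid lines,
    with weights making each contribute at most [L |x1 - x2| |y1 - y2|].
    Rectangle differences are additive under subdivision in each variable, so
    the cellwise bound propagates to arbitrary rectangles. Hence [C(N)] has the
    BMSDD property with constant [3 L] on every grid, in particular on the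
    refined one. *)

From Stdlib Require Import Reals ZArith Lra Lia ClassicalEpsilon.
Open Scope R_scope.

Lemma Z_le_ind_add1 (P : Z -> Prop) i : P i ->
  (forall j, (i <= j)%Z -> P j -> P (j + 1)%Z) -> forall j, (i <= j)%Z -> P j.
Proof.
  intros Hi Hstep; apply Z.le_ind; [intros ? ? ->; reflexivity | exact Hi |].
  intros j Hj; rewrite <- Z.add_1_r; auto.
Qed.

Section GridSequence.

Variable s : Z -> R.
Hypothesis s_grid : grid_seq s.

Lemma grid_seq_le i j : (i <= j)%Z -> s i <= s j.
Proof.
  destruct s_grid as [s_incr _].
  revert j; apply Z_le_ind_add1; [lra|].
  intros j _ IH; specialize (s_incr j); lra.
Qed.

Lemma grid_seq_lt_inv i j : s i < s j -> (i < j)%Z.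
Proof.
  intros Hlt; destruct (Z.lt_ge_cases i j) as [|Hji]; [assumption|].
  apply grid_seq_le in Hji; lra.
Qed.

Lemma grid_cell_exists x : exists i, s i <= x <= s (i + 1)%Z.
Proof.
  destruct s_grid as [_ [s_up s_down]].
  destruct (s_down x) as [i Hi], (s_up x) as [j Hj].
  assert (Hij : (i + 1 <= j)%Z) by (apply Zlt_le_succ, grid_seq_lt_inv; lra).
  revert j Hij Hj.
  apply (Z_le_ind_add1 (fun j => x < s j -> exists i, s i <= x <= s (i + 1)%Z)).
  - exists i; lra.
  - intros j _ IH Hj; destruct (Rlt_le_dec x (s j)) as [Hx|Hx]; [exact (IH Hx)|].
    exists j; lra.
Qed.

Lemma cell_spec x : s (cell s x) <= x <= s (cell s x + 1)%Z.
Proof. unfold cell; apply epsilon_spec, grid_cell_exists. Qed.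

Lemma two_cells_endpoint i i' x : i <> i' ->
  s i <= x <= s (i + 1)%Z -> s i' <= x <= s (i' + 1)%Z ->
  x = s i \/ x = s (i + 1)%Z.
Proof.
  intros Hii' Hx Hx'.
  apply Z.lt_gt_cases in Hii'; destruct Hii' as [Hlt|Hlt].
  - pose proof (grid_seq_le (i + 1) i' ltac:(lia)); lra.
  - pose proof (grid_seq_le (i' + 1) i ltac:(lia)); lra.
Qed.

Lemma additive_bound_of_cells (g : R -> R -> R) (c : R) :
  (forall a b d, g a b + g b d = g a d) ->
  (forall i a b, s i <= a <= s (i + 1)%Z -> s i <= b <= s (i + 1)%Z ->
     Rabs (g a b) <= c * Rabs (b - a)) ->
  forall a b, Rabs (g a b) <= c * Rabs (b - a).
Proof.
  intros g_add g_cell.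
  assert (g_ordered : forall i j, (i + 1 <= j)%Z -> forall a b,
             s i <= a -> a <= b -> b <= s j -> Rabs (g a b) <= c * (b - a)).
  { intros i; apply (Z_le_ind_add1 (fun j => forall a b,
      s i <= a -> a <= b -> b <= s j -> Rabs (g a b) <= c * (b - a))).
    - intros a b Ha Hab Hb; rewrite <- (Rabs_pos_eq (b - a)) by lra; apply (g_cell i); lra.
    - intros j Hij IH a b Ha Hab Hb; pose proof (grid_seq_le i j ltac:(lia)).
      destruct (Rle_dec b (s j)) as [Hbj|Hbj]; [apply IH; lra|].
      destruct (Rle_dec (s j) a) as [Haj|Haj].
      { rewrite <- (Rabs_pos_eq (b - a)) by lra; apply (g_cell j); lra. }
      rewrite <- (g_add a (s j) b).
      eapply Rle_trans; [apply Rabs_triang|].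
      assert (Rabs (g a (s j)) <= c * (s j - a)) by (apply IH; lra).
      assert (Rabs (g (s j) b) <= c * Rabs (b - s j)) by (apply (g_cell j); lra).
      rewrite (Rabs_pos_eq (b - s j)) in * by lra; lra. }
  assert (g_le : forall a b, a <= b -> Rabs (g a b) <= c * Rabs (b - a)).
  { intros a b Hab; rewrite (Rabs_pos_eq (b - a)) by lra.
    destruct s_grid as [_ [s_up s_down]].
    destruct (s_down a) as [i Hi], (s_up b) as [j Hj].
    apply (g_ordered i j); [apply Zlt_le_succ, grid_seq_lt_inv|..]; lra. }
  intros a b; destruct (Rle_dec a b) as [Hab|Hab]; [auto|].
  (* additivity gives g a a = 0 and hence g a b = - g b a *)
  assert (g_swap : g a b = - g b a) by (pose proof (g_add a a a); pose proof (g_add a b a); lra).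
  rewrite g_swap, Rabs_Ropp, Rabs_minus_sym; apply g_le; lra.
Qed.

End GridSequence.

Definition rect_diff (F : R -> R -> nat -> R) (x1 x2 y1 y2 : R) (k : nat) : R :=
  F x1 y1 k + F x2 y2 k - F x2 y1 k - F x1 y2 k.

Lemma Rabs_ddiff_le F x1 x2 y1 y2 k c : x1 <> x2 -> y1 <> y2 ->
  Rabs (ddiff F x1 x2 y1 y2 k) <= c <->
  Rabs (rect_diff F x1 x2 y1 y2 k) <= c * (Rabs (x1 - x2) * Rabs (y1 - y2)).
Proof.
  intros Hx Hy.
  unfold ddiff; fold (rect_diff F x1 x2 y1 y2 k).
  unfold Rdiv; rewrite Rabs_mult, Rabs_inv, Rabs_mult.
  set (E := Rabs (rect_diff F x1 x2 y1 y2 k)).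
  set (P := Rabs (x1 - x2) * Rabs (y1 - y2)).
  assert (HP : 0 < P) by (apply Rmult_lt_0_compat; apply Rabs_pos_lt; lra).
  split; intros H.
  - replace E with (E * / P * P) by (field; lra).
    apply Rmult_le_compat_r; lra.
  - apply Rmult_le_reg_r with P; [exact HP|].
    replace (E * / P * P) with E by (field; lra); exact H.
Qed.

Lemma on_grid_s s t i y : on_grid s t (s i) y.
Proof. left; exists i; reflexivity. Qed.

Lemma on_grid_t s t x j : on_grid s t x (t j).
Proof. right; exists j; reflexivity. Qed.

Lemma BMSDD_rect_diff m s t N L x1 x2 y1 y2 k : BMSDD m s t N L ->
  on_grid s t x1 y1 -> on_grid s t x1 y2 -> on_grid s t x2 y1 -> on_grid s t x2 y2 ->
  (k < m)%nat ->
  Rabs (rect_diff N x1 x2 y1 y2 k) <= L * (Rabs (x1 - x2) * Rabs (y1 - y2)).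
Proof.
  intros HN G11 G12 G21 G22 Hk.
  destruct (Req_dec x1 x2) as [<-|Hx].
  { unfold rect_diff; rewrite Rminus_diag, Rabs_R0.
    replace (_ + _ - _ - _) with 0 by ring; rewrite Rabs_R0; lra. }
  destruct (Req_dec y1 y2) as [<-|Hy].
  { unfold rect_diff; rewrite (Rminus_diag y1), Rabs_R0.
    replace (_ + _ - _ - _) with 0 by ring; rewrite Rabs_R0; lra. }
  apply Rabs_ddiff_le; auto.
Qed.

Definition coons_piece (s t : Z -> R) (N : R -> R -> nat -> R) (i j : Z)
    (x y : R) (k : nat) : R :=
  let s0 := s i in let s1 := s (i + 1)%Z in
  let t0 := t j in let t1 := t (j + 1)%Z in
  let h1 := s1 - s0 in let h2 := t1 - t0 in
  let B := (s1 - x) / h1 * ((t1 - y) / h2 * N s0 t0 k + (y - t0) / h2 * N s0 t1 k)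
         + (x - s0) / h1 * ((t1 - y) / h2 * N s1 t0 k + (y - t0) / h2 * N s1 t1 k) in
  (s1 - x) / h1 * N s0 y k + (x - s0) / h1 * N s1 y k
  + (t1 - y) / h2 * N x t0 k + (y - t0) / h2 * N x t1 k - B.

Section CoonsPiece.

Variables (s t : Z -> R) (N : R -> R -> nat -> R) (i j : Z).
Hypotheses (s_step : s i < s (i + 1)%Z) (t_step : t j < t (j + 1)%Z).

Lemma coons_piece_s_edge x y k : x = s i \/ x = s (i + 1)%Z ->
  coons_piece s t N i j x y k = N x y k.
Proof. intros [-> | ->]; unfold coons_piece; cbv zeta; field; lra. Qed.

Lemma coons_piece_t_edge x y k : y = t j \/ y = t (j + 1)%Z ->
  coons_piece s t N i j x y k = N x y k.
Proof. intros [-> | ->]; unfold coons_piece; cbv zeta; field; lra. Qed.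

Lemma rect_diff_coons_piece x1 x2 y1 y2 k :
  let s0 := s i in let s1 := s (i + 1)%Z in
  let t0 := t j in let t1 := t (j + 1)%Z in
  rect_diff (coons_piece s t N i j) x1 x2 y1 y2 k =
    (x2 - x1) / (s1 - s0) * rect_diff N s0 s1 y1 y2 k
  + (y2 - y1) / (t1 - t0) * rect_diff N x1 x2 t0 t1 k
  - (x2 - x1) * (y2 - y1) / ((s1 - s0) * (t1 - t0)) * rect_diff N s0 s1 t0 t1 k.
Proof. unfold rect_diff, coons_piece; cbv zeta; field; lra. Qed.

End CoonsPiece.

Lemma coons_eq_piece s t N i j x y k : grid_seq s -> grid_seq t ->
  s i <= x <= s (i + 1)%Z -> t j <= y <= t (j + 1)%Z ->
  coons s t N x y k = coons_piece s t N i j x y k.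
Proof.
  intros Gs Gt Hx Hy.
  pose proof (cell_spec s Gs x) as Hcx; pose proof (cell_spec t Gt y) as Hcy.
  change (coons s t N x y k) with (coons_piece s t N (cell s x) (cell t y) x y k).
  transitivity (coons_piece s t N i (cell t y) x y k).
  - destruct (Z.eq_dec (cell s x) i) as [->|Hi]; [reflexivity|].
    pose proof (two_cells_endpoint s Gs _ _ x Hi Hcx Hx).
    assert (i <> cell s x) as Hi' by congruence.
    pose proof (two_cells_endpoint s Gs _ _ x Hi' Hx Hcx).
    rewrite !coons_piece_s_edge by first [apply Gs | apply Gt | assumption].
    reflexivity.
  - destruct (Z.eq_dec (cell t y) j) as [->|Hj]; [reflexivity|].
    pose proof (two_cells_endpoint t Gt _ _ y Hj Hcy Hy).
    assert (j <> cell t y) as Hj' by congruence.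
    pose proof (two_cells_endpoint t Gt _ _ y Hj' Hy Hcy).
    rewrite !coons_piece_t_edge by first [apply Gs | apply Gt | assumption].
    reflexivity.
Qed.

Lemma Rabs_scale_le a E c : Rabs E <= c -> Rabs (a * E) <= Rabs a * c.
Proof. intros H; rewrite Rabs_mult; apply Rmult_le_compat_l; [apply Rabs_pos | exact H]. Qed.

Section CoonsBound.

Variables (m : nat) (s t : Z -> R) (N : R -> R -> nat -> R) (L : R).
Hypotheses (s_grid : grid_seq s) (t_grid : grid_seq t) (N_BMSDD : BMSDD m s t N L).

Lemma coons_rect_diff_cell_bound i j x1 x2 y1 y2 k : (k < m)%nat ->
  s i <= x1 <= s (i + 1)%Z -> s i <= x2 <= s (i + 1)%Z ->
  t j <= y1 <= t (j + 1)%Z -> t j <= y2 <= t (j + 1)%Z ->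
  Rabs (rect_diff (coons s t N) x1 x2 y1 y2 k)
    <= 3 * L * (Rabs (x1 - x2) * Rabs (y1 - y2)).
Proof.
  intros Hk Hx1 Hx2 Hy1 Hy2.
  assert (s_step : s i < s (i + 1)%Z) by apply s_grid.
  assert (t_step : t j < t (j + 1)%Z) by apply t_grid.
  unfold rect_diff at 1.
  rewrite !(coons_eq_piece s t N i j) by assumption.
  fold (rect_diff (coons_piece s t N i j) x1 x2 y1 y2 k).
  rewrite rect_diff_coons_piece by assumption; cbv zeta.
  assert (E1 : Rabs (rect_diff N (s i) (s (i + 1)%Z) y1 y2 k)
                <= L * (Rabs (s i - s (i + 1)%Z) * Rabs (y1 - y2)))
    by (apply BMSDD_rect_diff with m s t; auto using on_grid_s).
  assert (E2 : Rabs (rect_diff N x1 x2 (t j) (t (j + 1)%Z) k)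
                <= L * (Rabs (x1 - x2) * Rabs (t j - t (j + 1)%Z)))
    by (apply BMSDD_rect_diff with m s t; auto using on_grid_t).
  assert (E3 : Rabs (rect_diff N (s i) (s (i + 1)%Z) (t j) (t (j + 1)%Z) k)
                <= L * (Rabs (s i - s (i + 1)%Z) * Rabs (t j - t (j + 1)%Z)))
    by (apply BMSDD_rect_diff with m s t; auto using on_grid_s).
  set (s0 := s i) in *; set (s1 := s (i + 1)%Z) in *.
  set (t0 := t j) in *; set (t1 := t (j + 1)%Z) in *.
  apply Rabs_scale_le with (a := (x2 - x1) / (s1 - s0)) in E1.
  apply Rabs_scale_le with (a := (y2 - y1) / (t1 - t0)) in E2.
  apply Rabs_scale_le with (a := (x2 - x1) * (y2 - y1) / ((s1 - s0) * (t1 - t0))) in E3.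
  eapply Rle_trans.
  { unfold Rminus at 1; eapply Rle_trans; [apply Rabs_triang|].
    rewrite Rabs_Ropp; apply Rplus_le_compat_r, Rabs_triang. }
  eapply Rle_trans; [apply Rplus_le_compat; [apply Rplus_le_compat|]; eassumption|].
  right; unfold Rdiv; rewrite !Rabs_mult, !Rabs_inv, !Rabs_mult.
  rewrite (Rabs_minus_sym x2), (Rabs_minus_sym y2), (Rabs_minus_sym s1),
    (Rabs_minus_sym t1).
  assert (0 < Rabs (s0 - s1)) by (apply Rabs_pos_lt; lra).
  assert (0 < Rabs (t0 - t1)) by (apply Rabs_pos_lt; lra).
  field; lra.
Qed.

Lemma coons_rect_diff_bound x1 x2 y1 y2 k : (k < m)%nat ->
  Rabs (rect_diff (coons s t N) x1 x2 y1 y2 k)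
    <= 3 * L * (Rabs (x1 - x2) * Rabs (y1 - y2)).
Proof.
  intros Hk.
  replace (3 * L * (Rabs (x1 - x2) * Rabs (y1 - y2)))
    with (3 * L * Rabs (x1 - x2) * Rabs (y2 - y1))
    by (rewrite (Rabs_minus_sym y2); ring).
  apply (additive_bound_of_cells t t_grid (fun a b => rect_diff (coons s t N) x1 x2 a b k)).
  { intros; unfold rect_diff; ring. }
  intros j a b Ha Hb.
  replace (3 * L * Rabs (x1 - x2) * Rabs (b - a))
    with (3 * L * Rabs (b - a) * Rabs (x2 - x1))
    by (rewrite (Rabs_minus_sym x2); ring).
  apply (additive_bound_of_cells s s_grid (fun c d => rect_diff (coons s t N) c d a b k)).
  { intros; unfold rect_diff; ring. }
  intros i c d Hc Hd.
  replace (3 * L * Rabs (b - a) * Rabs (d - c))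
    with (3 * L * (Rabs (c - d) * Rabs (a - b)))
    by (rewrite (Rabs_minus_sym d), (Rabs_minus_sym b); ring).
  apply coons_rect_diff_cell_bound with i j; assumption.
Qed.

Lemma coons_BMSDD (s' t' : Z -> R) : BMSDD m s' t' (coons s t N) (3 * L).
Proof.
  intros x1 x2 y1 y2 Hx Hy _ _ _ _ k Hk.
  apply Rabs_ddiff_le; auto using coons_rect_diff_bound.
Qed.

End CoonsBound.

Theorem corollary2 (m : nat) (s t : Z -> R) (N : R -> R -> nat -> R) (L : R)
  (alphas betas alphat betat : Z -> R) :
  grid_seq s -> grid_seq t ->
  C0_net m s t N ->
  BMSDD m s t N L ->
  in_W alphas betas -> in_W alphat betat ->
  BMSDD m (refine s alphas betas) (refine t alphat betat) (coons s t N) (3 * L).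
Proof.
  intros s_grid t_grid _ N_BMSDD _ _.
  apply coons_BMSDD; assumption.
Qed.
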